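(* Let $G$ be a factor graph with known factors $\boldsymbol F=\{f_1,\dots,f_m\}$ and unknown factors $\boldsymbol F'=\{f'_1,\dots,f'_z\}$, and suppose that for every unknown factor $f_i\in\boldsymbol F'$ there is at least one known factor $f_j\in\boldsymbol F$ that is possibly identical to $f_i$ (i.e. $f_i\approx f_j$). Then the LIFG algorithm is able to replace all unknown potentials in $G$ by known potentials, i.e. (for a suitable choice of the threshold $\theta\in[0,1]$) every unknown factor is assigned the colour and the potential mappings of at least one known factor.
   Context: A factor graph (FG) $G=(\boldsymbol V,\boldsymbol E)$ is an undirected bipartite graph with node set $\boldsymbol V=\boldsymbol R\cup\boldsymbol F$, where $\boldsymbol R$ is a set of random variables (each $R$ with a finite range $\mathrm{range}(R)$) and $\boldsymbol F$ a set of factors; each factor $f_j$ defines a function $\phi_j(\mathcal R_j)$ mapping assignments of a sequence $\mathcal R_j$ of random variables to positive reals (potentials), and $R$ is adjacent to $f_j$ iff $R$ occurs in $\mathcal R_j$. A factor is \emph{unknown} if its argument list is known but its potential values are unknown; otherwise it is known. Evidence is a set of observed events $R=r$. $\mathrm{Ne}_G(v)$ denotes the set of neighbours of node $v$. The 2-step neighbourhood of a factor $f$ is $\mathrm{Ne}^2_G(f)=\{R\mid R\in\mathrm{Ne}_G(f)\}\cup\{f'\mid\exists R: R\in\mathrm{Ne}_G(f)\wedge f'\in\mathrm{Ne}_G(R)\}$, and $G[V']$ is the induced subgraph. For factors $f_i,f_j$, $G[\mathrm{Ne}^2_G(f_i)]$ and $G[\mathrm{Ne}^2_G(f_j)]$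 are \emph{indistinguishable} if $|\mathrm{Ne}_G(f_i)|=|\mathrm{Ne}_G(f_j)|$ and there is a bijection $\tau:\mathrm{Ne}_G(f_i)\to\mathrm{Ne}_G(f_j)$ such that for each $R_k$, $R_k$ and $\tau(R_k)$ have identical observed evidence, identical ranges, and $|\mathrm{Ne}_G(R_k)|=|\mathrm{Ne}_G(\tau(R_k))|$. Factors $f_i,f_j$ are \emph{possibly identical}, $f_i\approx f_j$, if their induced 2-step neighbourhoods are indistinguishable and at least one of them is unknown or both encode identical potential mappings. LIFG algorithm (input: FG $G$ with known factors $\boldsymbol F$, unknown factors $\boldsymbol F'$, evidence, threshold $\theta\in[0,1]$): (1) colour each known factor by its potentials; (2) give each unknown factor a unique colour; (3) for each unknown $f_i$, set $C_{f_i}=\emptyset$ and for every factor $f_j\ne f_i$ with $f_i\approx f_j$: if $f_j$ is unknown, give $f_j$ the colour of $f_i$, otherwise add $f_j$ to $C_{f_i}$; (4) for each $C_{f_i}$, let $C^{\ell}_{f_i}$ be a maximal subset of $C_{f_i}$ whose elements are pairwise possibly identical; if $|C^{\ell}_{f_i}|/|C_{f_i}|\ge\theta$, give all $f_j\in C^{\ell}_{f_i}$ the colour of $f_i$ and assign to $f_i$ the potentials of the factors in $C^{\ell}_{f_i}$; (5) run the Advanced Colour Passing (colour-passing lifting) algorithm on the resulting graph and evidence to obtain the lifted representation. *)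

From HB Require Import structures.
From mathcomp Require Import all_boot all_order all_algebra.
From mathcomp Require Import boolp reals.
Set Implicit Arguments. Unset Strict Implicit. Unset Printing Implicit Defensive.
Import Order.TTheory GRing.Theory Num.Theory.
Local Open Scope ring_scope.

(* A factor graph with random variables of type V and factors of type F.
   - fg_args f : the argument sequence R_j of factor f (R adjacent to f iff R occurs in it)
   - fg_range R : |range(R)|, the range of R being {0, ..., fg_range R - 1}
   - fg_ev R : Some r iff the event R = r is observed (evidence), None otherwise
   - fg_pot f : Some phi if f is known with potential mapping phi (on assignments,
                i.e. value sequences for fg_args f), None if f is unknown. *)
Record factor_graph (R : realType) (V F : finType) := FGraph {
  fg_args : F -> seq V;
  fg_range : V -> nat;
  fg_ev : V -> option nat;
  fg_pot : F -> option (seq nat -> R)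
}.

Section FG.
Context (R : realType) (V F : finType) (G : factor_graph R V F).

Definition knownb (f : F) : bool := if fg_pot G f is Some _ then true else false.
Definition unknownb (f : F) : bool := ~~ knownb f.

Definition NeF (f : F) : {set V} := [set v | v \in fg_args G f].
Definition NeV (v : V) : {set F} := [set f | v \in fg_args G f].

Definition valid_assign (f : F) (a : seq nat) : bool :=
  all2 (fun x v => x < fg_range G v)%N a (fg_args G f).

Definition ident_pot (f g : F) (phi psi : seq nat -> R) : Prop :=
  forall a, (valid_assign f a = valid_assign g a) /\ (valid_assign f a -> phi a = psi a).

(* induced 2-step neighbourhoods of fi and fj are indistinguishable *)
Definition indist (fi fj : F) : Prop :=
  #|NeF fi| = #|NeF fj| /\
  exists tau : V -> V,
    {in NeF fi &, injective tau} /\ tau @: NeF fi = NeF fj /\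
    forall v, v \in NeF fi ->
      [/\ fg_ev G (tau v) = fg_ev G v, fg_range G (tau v) = fg_range G v
        & #|NeV (tau v)| = #|NeV v| ].

Definition poss_id (fi fj : F) : Prop :=
  indist fi fj /\
  (fg_pot G fi = None \/ fg_pot G fj = None \/
   exists phi psi, [/\ fg_pot G fi = Some phi, fg_pot G fj = Some psi & ident_pot fi fj phi psi]).

(* Steps (1)-(2): admissible initial colourings (colours are natural numbers). *)
Definition init_colouring (col : F -> nat) : Prop :=
  (forall f g phi psi, fg_pot G f = Some phi -> fg_pot G g = Some psi ->
     (col f = col g <-> ident_pot f g phi psi)) /\
  (forall f g, unknownb f -> g != f -> col g <> col f).

(* Step (3): recolouring of unknown factors, processing the unknown factors in order s. *)
Definition step3 (col : F -> nat) (fi : F) : F -> nat :=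
  fun g => if [&& g != fi, unknownb g & `[< poss_id fi g >]] then col fi else col g.

Definition Cset (fi : F) : {set F} :=
  [set g | [&& g != fi, knownb g & `[< poss_id fi g >]]].

Definition pairwise_pi (S : {set F}) : Prop :=
  forall g h, g \in S -> h \in S -> g != h -> poss_id g h.
Definition maximal_pi (C S : {set F}) : Prop :=
  [/\ S \subset C, pairwise_pi S &
      forall S' : {set F}, S \subset S' -> S' \subset C -> pairwise_pi S' -> S' = S].

(* Step (4) for one unknown factor fi, with chosen maximal subset Cl fi of C_{fi};
   the state is (colouring, current potential assignment). *)
Definition step4 (theta : R) (Cl : F -> {set F})
    (st : (F -> nat) * (F -> option (seq nat -> R))) (fi : F) :=
  let: (col, np) := st in
  if (0 < #|Cset fi|)%N && (theta <= #|Cl fi|%:R / #|Cset fi|%:R) then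
    (fun g => if g \in Cl fi then col fi else col g,
     fun g => if g == fi then
                (if [pick h in Cl fi] is Some h then fg_pot G h else np g)
              else np g)
  else st.

Definition LIFG (theta : R) (col0 : F -> nat) (s : seq F) (Cl : F -> {set F}) :=
  foldl (step4 theta Cl) (foldl step3 col0 s, fg_pot G) s.

End FG.

(* Take theta = 0.  Indistinguishability of 2-step neighbourhoods is an
   equivalence relation, so after step (3) any two indistinguishable unknown
   factors share a colour.  In step (4), C_{f_i} contains the known factor that
   is possibly identical to f_i, so a maximal pairwise possibly identical subset
   C^l_{f_i} of it is non-empty, and with theta = 0 the factor f_i gets the
   potentials of some h in C^l_{f_i}, while h gets the colour of f_i.  A later
   unknown factor f_p recolours h only if h is also in C^l_{f_p}; then f_i and
   f_p are both indistinguishable from h, so they already share a colour and h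
   keeps the colour of f_i. *)

From HB Require Import structures.
From mathcomp Require Import all_boot all_order all_algebra.
From mathcomp Require Import boolp reals.
Import Order.TTheory GRing.Theory Num.Theory.
Local Open Scope ring_scope.
Set Implicit Arguments. Unset Strict Implicit.

Section LIFG_theory.
Variables (R : realType) (V F : finType) (G : factor_graph R V F).

Lemma knownbE f : knownb G f = (fg_pot G f != None).
Proof. by rewrite /knownb; case: fg_pot. Qed.

Lemma unknownbE f : unknownb G f = (fg_pot G f == None).
Proof. by rewrite /unknownb knownbE negbK. Qed.

Lemma indist_refl f : indist G f f.
Proof.
split=> //; exists id; split; first by move=> x y _ _.
by split; [apply: imset_id | move=> v _; split].
Qed.

Lemma indist_trans f g h : indist G f g -> indist G g h -> indist G f h.
Proof.
move=> [card_fg [t1 [inj1 [im1 agree1]]]] [card_gh [t2 [inj2 [im2 agree2]]]].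
have t1_maps v : v \in NeF G f -> t1 v \in NeF G g.
  by move=> vf; rewrite -im1 imset_f.
split; first by rewrite card_fg.
exists (t2 \o t1); split.
  by move=> x y xf yf /= /inj2 /inj1; apply; rewrite ?t1_maps.
split; first by rewrite imset_comp im1 im2.
move=> v vf /=; have [ev1 rg1 nb1] := agree1 v vf.
have [ev2 rg2 nb2] := agree2 (t1 v) (t1_maps v vf).
by split; [rewrite ev2 ev1 | rewrite rg2 rg1 | rewrite nb2 nb1].
Qed.

Lemma indist_sym f g : indist G f g -> indist G g f.
Proof.
move=> [card_fg [t [inj_t [im_t agree]]]].
pose t_inv w := odflt w [pick v in NeF G f | t v == w].
have t_invK w : w \in NeF G g -> t_inv w \in NeF G f /\ t (t_inv w) = w.
  rewrite -im_t => /imsetP [v vf ->]; rewrite /t_inv.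
  by case: pickP => [v' /andP [v'f /eqP ->] | /(_ v)] //; rewrite vf eqxx.
have t_maps v : v \in NeF G f -> t v \in NeF G g.
  by move=> vf; rewrite -im_t imset_f.
split; first by rewrite card_fg.
exists t_inv; split.
  move=> x y xg yg E.
  by have [_ <-] := t_invK x xg; have [_ <-] := t_invK y yg; rewrite E.
split.
  apply/eqP; rewrite eqEsubset; apply/andP; split.
    by apply/subsetP => _ /imsetP [w wg ->]; have [] := t_invK w wg.
  apply/subsetP => v vf; apply/imsetP; exists (t v); first exact: t_maps.
  by have [? ?] := t_invK (t v) (t_maps v vf); apply: inj_t.
move=> w wg; have [vf tK] := t_invK w wg; have [ev rg nb] := agree _ vf.
by rewrite tK in ev rg nb; split.
Qed.

Lemma poss_id_unknownl fi g : fg_pot G fi = None -> poss_id G fi g <-> indist G fi g.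
Proof. by move=> fi_unknown; split=> [[] // | ?]; split=> //; left. Qed.

Lemma mem_Cset fi fj :
  fg_pot G fi = None -> fg_pot G fj <> None -> poss_id G fi fj -> fj \in Cset G fi.
Proof.
move=> fi_unknown fj_known fi_fj; rewrite inE knownbE.
apply/and3P; split; [apply/eqP => fj_fi | exact/eqP | exact/asboolP].
by apply: fj_known; rewrite fj_fi.
Qed.

Lemma maximal_pi_set0 C : maximal_pi G C set0 -> C = set0.
Proof.
move=> [_ _ maxS]; apply/setP => x; rewrite inE; apply/negbTE/negP => xC.
have pairwise1 : pairwise_pi G [set x].
  by move=> g h; rewrite !inE => /eqP -> /eqP ->; rewrite eqxx.
have := maxS [set x] (sub0set _); rewrite sub1set xC => /(_ isT pairwise1).
by move/setP/(_ x); rewrite !inE eqxx.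
Qed.

Lemma maximal_pi_Cset fi S h :
  maximal_pi G (Cset G fi) S -> h \in S -> fg_pot G h <> None /\ indist G fi h.
Proof.
move=> [/subsetP sub _ _] /sub; rewrite inE => /and3P [_ h_known /asboolP [fi_h _]].
by split=> //; apply/eqP; rewrite -knownbE.
Qed.

Definition indist_coloured (col : F -> nat) (done : seq F) : Prop :=
  forall p x, p \in done -> fg_pot G x = None -> indist G p x -> col x = col p.

Lemma step3_unknown col fk g : fg_pot G fk = None -> fg_pot G g = None ->
  step3 G col fk g = if `[< indist G fk g >] then col fk else col g.
Proof.
move=> fk_unknown g_unknown; rewrite /step3 unknownbE g_unknown eqxx /=.
have -> : `[< poss_id G fk g >] = `[< indist G fk g >].
  by apply/asboolP/asboolP => /(poss_id_unknownl g fk_unknown).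
by case: eqP => [-> | _] //=; case: ifP.
Qed.

Lemma step3_indist_coloured col done fk :
  {in done, forall p, fg_pot G p = None} -> fg_pot G fk = None ->
  indist_coloured col done -> indist_coloured (step3 G col fk) (rcons done fk).
Proof.
move=> done_unknown fk_unknown col_done p x.
rewrite mem_rcons inE => /orP [/eqP -> | pd] x_unknown p_x.
  by rewrite !step3_unknown // (asboolT p_x) (asboolT (indist_refl fk)).
rewrite !step3_unknown ?(done_unknown p pd) //.
case: (asboolP (indist G fk p)) => [fk_p | not_fk_p].
  by rewrite (asboolT (indist_trans fk_p p_x)).
case: (asboolP (indist G fk x)) => [fk_x | _]; last exact: col_done.
by case: not_fk_p; apply: indist_trans fk_x (indist_sym p_x).
Qed.

Lemma foldl_step3_indist_coloured s col done :
  {in done ++ s, forall p, fg_pot G p = None} -> indist_coloured col done ->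
  indist_coloured (foldl (step3 G) col s) (done ++ s).
Proof.
elim: s col done => [|fk s IHs] col done all_unknown col_done /=.
  by rewrite cats0.
rewrite -cat_rcons; apply: IHs; first by rewrite cat_rcons.
apply: step3_indist_coloured => // [p pd | ]; apply: all_unknown.
  by rewrite mem_cat pd.
by rewrite mem_cat inE eqxx orbT.
Qed.

Section Step4.
Variables (Cl : F -> {set F}) (col1 : F -> nat).
Hypothesis Cl_maximal :
  forall fi, fg_pot G fi = None -> maximal_pi G (Cset G fi) (Cl fi).
Hypothesis unknown_has_match :
  forall fi, fg_pot G fi = None -> exists fj, fg_pot G fj <> None /\ poss_id G fi fj.
Hypothesis col1_indist : forall x y, fg_pot G x = None -> fg_pot G y = None ->
  indist G x y -> col1 x = col1 y.

Definition step4_inv (st : (F -> nat) * (F -> option (seq nat -> R)))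
    (done : seq F) : Prop :=
  [/\ forall x, fg_pot G x = None -> st.1 x = col1 x,
      forall p h, p \in done -> h \in Cl p -> st.1 h = col1 p
    & forall p, p \in done -> exists2 h, h \in Cl p & st.2 p = fg_pot G h].

Lemma Cset_unknown_gt0 fi : fg_pot G fi = None -> (0 < #|Cset G fi|)%N.
Proof.
move=> fi_unknown; have [fj [fj_known fi_fj]] := unknown_has_match fi_unknown.
by apply/card_gt0P; exists fj; apply: mem_Cset.
Qed.

Lemma Cl_unknown_neq0 fi : fg_pot G fi = None -> Cl fi != set0.
Proof.
move=> fi_unknown; apply/eqP => Cl0; have := Cl_maximal fi_unknown.
rewrite Cl0 => /maximal_pi_set0 Cset0.
by have := Cset_unknown_gt0 fi_unknown; rewrite Cset0 cards0.
Qed.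

Lemma step4_theta0 col np fk : fg_pot G fk = None ->
  step4 G 0 Cl (col, np) fk =
    (fun g => if g \in Cl fk then col fk else col g,
     fun g => if g == fk then
                (if [pick h in Cl fk] is Some h then fg_pot G h else np g)
              else np g).
Proof.
by move=> fk_unknown; rewrite /step4 Cset_unknown_gt0 // divr_ge0 ?ler0n.
Qed.

Lemma step4_inv_rcons st done fk :
  {in done, forall p, fg_pot G p = None} -> fg_pot G fk = None ->
  fk \notin done -> step4_inv st done -> step4_inv (step4 G 0 Cl st fk) (rcons done fk).
Proof.
move=> done_unknown fk_unknown fk_new.
case: st => col np; rewrite step4_theta0 // /step4_inv /=.
case=> col_unknown col_Cl pot_Cl.
have Cl_fk := maximal_pi_Cset (Cl_maximal fk_unknown).
split=> /=.
- move=> x x_unknown; case: ifP => [/Cl_fk [] // | _]; exact: col_unknown.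
- move=> p h; rewrite mem_rcons inE => /orP [/eqP -> -> | pd hp].
    exact: col_unknown.
  case: ifP => [h_fk | _]; last exact: col_Cl.
  have [_ fk_h] := Cl_fk h h_fk.
  have [_ p_h] := maximal_pi_Cset (Cl_maximal (done_unknown p pd)) hp.
  rewrite col_unknown //; apply: col1_indist => //; first exact: done_unknown.
  exact: indist_trans fk_h (indist_sym p_h).
- move=> p; rewrite mem_rcons inE => /orP [/eqP -> | pd].
    rewrite eqxx; case: pickP => [h h_fk | Cl_empty]; first by exists h.
    by case/set0Pn: (Cl_unknown_neq0 fk_unknown) => h; rewrite Cl_empty.
  have -> : (p == fk) = false by apply: contraNF fk_new => /eqP <-.
  exact: pot_Cl.
Qed.

Lemma foldl_step4_inv s st done :
  {in done ++ s, forall p, fg_pot G p = None} -> uniq (done ++ s) ->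
  step4_inv st done -> step4_inv (foldl (step4 G 0 Cl) st s) (done ++ s).
Proof.
elim: s st done => [|fk s IHs] st done all_unknown uniq_all inv_done /=.
  by rewrite cats0.
rewrite -cat_rcons; apply: IHs; rewrite ?cat_rcons //.
apply: step4_inv_rcons => // [p pd | | ].
- by apply: all_unknown; rewrite mem_cat pd.
- by apply: all_unknown; rewrite mem_cat inE eqxx orbT.
- move: uniq_all; rewrite cat_uniq => /and3P [_ /hasPn /(_ fk)].
  by rewrite inE eqxx => /(_ isT).
Qed.

End Step4.

End LIFG_theory.

Theorem mainTheorem1 (R : realType) (V F : finType) (G : factor_graph R V F) :
  (* potentials of known factors are positive *)
  (forall f phi, fg_pot G f = Some phi -> forall a, valid_assign G f a -> 0 < phi a) ->
  (* every unknown factor is possibly identical to some known factor *)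
  (forall fi, fg_pot G fi = None ->
     exists fj, fg_pot G fj <> None /\ poss_id G fi fj) ->
  exists theta : R, 0 <= theta <= 1 /\
    forall (col0 : F -> nat) (s : seq F) (Cl : F -> {set F}),
      init_colouring G col0 ->
      uniq s -> (forall f, (f \in s) = unknownb G f) ->
      (forall fi, fg_pot G fi = None -> maximal_pi G (Cset G fi) (Cl fi)) ->
      forall fi, fg_pot G fi = None ->
        exists fj, fg_pot G fj <> None /\
          (LIFG G theta col0 s Cl).1 fi = (LIFG G theta col0 s Cl).1 fj /\
          (LIFG G theta col0 s Cl).2 fi = fg_pot G fj.
Proof.
move=> _ has_match; exists 0; split; first by rewrite lexx ler01.
move=> col0 s Cl _ uniq_s s_unknown Cl_maximal fi fi_unknown.
have unknown_s f : (f \in s) = (fg_pot G f == None) by rewrite s_unknown unknownbE.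
have s_all_unknown : {in s, forall p, fg_pot G p = None}.
  by move=> p; rewrite unknown_s => /eqP.
set col1 := foldl (step3 G) col0 s.
have col1_indist x y : fg_pot G x = None -> fg_pot G y = None ->
    indist G x y -> col1 x = col1 y.
  move=> x_unknown y_unknown x_y; symmetry.
  apply: (foldl_step3_indist_coloured (done := [::])) => //=.
  by rewrite unknown_s x_unknown.
have inv0 : step4_inv G Cl col1 (col1, fg_pot G) [::] by [].
have [col_unknown col_Cl pot_Cl] :=
  foldl_step4_inv Cl_maximal has_match col1_indist (done := [::])
    s_all_unknown uniq_s inv0.
have fi_s : fi \in s by rewrite unknown_s fi_unknown.
have [h h_Cl pot_fi] := pot_Cl fi fi_s.
exists h; split; first by have [] := maximal_pi_Cset (Cl_maximal fi fi_unknown) h_Cl.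
by rewrite /LIFG -/col1 pot_fi (col_Cl fi h fi_s h_Cl) col_unknown.
Qed.
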